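(* For every $F\subset E_d(\square_m)$ and $j\in\mathbb N$, $$-\nabla\cdot\big(\mathbf a^F\nabla V_m(F,j)\big)=\nabla\cdot\mathbf W_m(F,j)\quad\text{at every point of }\mathrm{int}(\square_m),$$ where $\mathbf W_m(F,j)$ is the anti-symmetric vector field on oriented edges of $\square_m$ $$\mathbf W_m(F,j)=\sum_{e\in E_d(\square_m)\setminus F}(\mathbf a^e-\mathbf a)\Big(\nabla V_m(F,j-1)-\nabla V_m(F\cup\{e\},j-2)+\nabla V_m(F\cup\{e\},j-1)\Big)+\sum_{e\in F}(\mathbf a^e-\mathbf a)\Big(\nabla V_m(F\setminus\{e\},j)-\nabla V_m(F,j-1)\Big).$$
   Context: Bond configurations on $\mathbb Z^d$. $\square_m=\mathbb Z^d\cap(-3^m/2,3^m/2)^d$; $E_d(U)$ nearest-neighbour edges inside $U$; $\partial U=\{x\in U:\exists y\sim x,y\notin U\}$, $\mathrm{int}(U)=U\setminus\partial U$. $\nabla u(x,y)=u(y)-u(x)$; for a function $\mathbf b$ on edges and a vector field $W$, $(\mathbf bW)(x,y)=\mathbf b(\{x,y\})W(x,y)$; divergence $\nabla\cdot W(x)=\sum_{y\sim x}W(x,y)$. Fix $\xi\in\mathbb R^d$; for each configuration $\mathbf b$, $v_m(\mathbf b)$ is a fixed function on $\square_m$ with $v_m(\mathbf b)=\xi\cdot x$ on $\partial\square_m$ and $\nabla\cdot(\mathbf b\nabla v_m(\mathbf b))=0$ at every $x\in\mathrm{int}(\square_m)$. $\mathbf a^G(e)=\mathbf 1_{e\in G}+\mathbf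 a(e)\mathbf 1_{e\notin G}$, $\mathbf a^e=\mathbf a^{\{e\}}$; $D_Gf(\mathbf a)=\sum_{G'\subset G}(-1)^{|G\setminus G'|}f(\mathbf a^{G'})$. $V_m(F,j)=\sum_{G\subset E_d(\square_m)\setminus F,|G|=j}D_{F\cup G}v_m$ evaluated at $\mathbf a$, with $V_m(F,j)=0$ for $j<0$. *)

From mathcomp Require Import all_boot all_order all_algebra.
Set Implicit Arguments. Unset Strict Implicit. Unset Printing Implicit Defensive.
Import Order.TTheory GRing.Theory Num.Theory.
Local Open Scope ring_scope.

Definition zpt (d : nat) := {ffun 'I_d -> int}.

Definition evec (d : nat) (i : 'I_d) : zpt d := [ffun j => ((j == i) : nat)%:Z].

Definition nn (d : nat) (x y : zpt d) : bool := (\sum_i absz (x i - y i) == 1)%N.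

Definition inbox (m d : nat) (x : zpt d) : bool :=
  [forall i, ((absz (x i)).*2 < 3 ^ m)%N].

Definition onbound (m d : nat) (x : zpt d) : Prop :=
  inbox m x /\ exists y : zpt d, nn x y /\ ~~ inbox m y.

Definition interior (m d : nat) (x : zpt d) : Prop := inbox m x /\ ~ onbound m x.

(** Bond configurations: [b x i] is the value on the (unoriented) nearest
    neighbour edge {x, x + e_i}; every edge of Z^d is uniquely of this form. *)
Definition conf (R : Type) (d : nat) := zpt d -> 'I_d -> R.

Definition grad (R : zmodType) (d : nat) (u : zpt d -> R) : zpt d -> zpt d -> R :=
  fun x y => u y - u x.

(** (b W)(x,y) = b({x,y}) W(x,y)  (b({x,y}) read as 0 if x, y are not neighbours) *)
Definition mulbW (R : ringType) (d : nat) (b : conf R d) (W : zpt d -> zpt d -> R)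
  : zpt d -> zpt d -> R :=
  fun x y => (\sum_(i < d) (((y == x + evec i) : nat)%:R * b x i
                           + ((x == y + evec i) : nat)%:R * b y i)) * W x y.

Definition div (R : zmodType) (d : nat) (W : zpt d -> zpt d -> R) (x : zpt d) : R :=
  \sum_(i < d) (W x (x + evec i) + W x (x - evec i)).

(** Finite enumeration of the box: coordinates k_i in {0,..,3^m-1} shifted by
    (3^m-1)/2 give exactly the points of square_m. *)
Definition boxpt (m d : nat) := {ffun 'I_d -> 'I_(3 ^ m)}.
Definition bpos (m d : nat) (k : boxpt m d) : zpt d :=
  [ffun i => ((k i : nat)%:Z - ((3 ^ m).-1./2)%:Z)%R].

(** Edge (k, i) stands for the Z^d edge {bpos k, bpos k + e_i}. *)
Definition bedge (m d : nat) := (boxpt m d * 'I_d)%type.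

Definition Ebox (m d : nat) : {set bedge m d} :=
  [set e : bedge m d | inbox m (bpos e.1) && inbox m (bpos e.1 + evec e.2)].

Definition cfg_set (R : ringType) (m d : nat) (G : {set bedge m d}) (a : conf R d)
  : conf R d :=
  fun x i => if [exists e in G, (bpos e.1 == x) && (e.2 == i)] then 1 else a x i.

Definition DG (R : ringType) (m d : nat) (f : conf R d -> zpt d -> R)
  (G : {set bedge m d}) (a : conf R d) : zpt d -> R :=
  fun x => \sum_(G' : {set bedge m d} | G' \subset G)
             (-1) ^+ #|G :\: G'| * f (cfg_set G' a) x.

Definition Vm (R : ringType) (m d : nat) (v : conf R d -> zpt d -> R) (a : conf R d)
  (F : {set bedge m d}) (j : int) : zpt d -> R :=
  match j with
  | Posz n => fun x => \sum_(G : {set bedge m d} | (G \subset Ebox m d :\: F) && (#|G| == n))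
                         DG v (F :|: G) a x
  | Negz _ => fun _ => 0
  end.

Definition dconf (R : ringType) (m d : nat) (e : bedge m d) (a : conf R d) : conf R d :=
  fun x i => cfg_set [set e] a x i - a x i.

Definition Wm (R : ringType) (m d : nat) (v : conf R d -> zpt d -> R) (a : conf R d)
  (F : {set bedge m d}) (j : int) : zpt d -> zpt d -> R :=
  fun x y =>
    \sum_(e in Ebox m d :\: F)
      mulbW (dconf e a)
        (grad (fun z => Vm v a F (j - 1) z - Vm v a (F :|: [set e]) (j - 2) z
                        + Vm v a (F :|: [set e]) (j - 1) z)) x y
  + \sum_(e in F)
      mulbW (dconf e a)
        (grad (fun z => Vm v a (F :\ e) j z - Vm v a F (j - 1) z)) x y.

From mathcomp Require Import all_boot all_order all_algebra.
From mathcomp Require Import ring.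
From Stdlib Require Import FunctionalExtensionality.
Import Order.TTheory GRing.Theory Num.Theory.
Set Implicit Arguments. Unset Strict Implicit. Unset Printing Implicit Defensive.
Local Open Scope ring_scope.

(* Write L_b u := div (b grad u), which is bilinear in (b, u), and
   de := a^e - a.  Since a^G = a + sum_(e in G) de, the harmonicity of v(a^G)
   for the conductance a^G reads L_a v(a^G) = - sum_(e in G) L_de v(a^G).
   Taking the alternating sum over G in H, and splitting according to whether
   e is in G, gives L_a (D_H v) = - sum_(e in H) L_de (D_H v + D_(H\e) v).
   Summing over the H = F u G with |G| = j, writing a^F = a + sum_(e in F) de,
   and regrouping the pairs (G, e) by e turns both sides into V_m and W_m. *)

Definition div_grad (R : nzRingType) d (b : conf R d) (u : zpt d -> R) (x : zpt d) : R :=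
  div (mulbW b (grad u)) x.

Section DivGrad.
Variables (R : comNzRingType) (d : nat).
Implicit Types (b : conf R d) (u : zpt d -> R) (x : zpt d).

Lemma divD (W1 W2 : zpt d -> zpt d -> R) x :
  div (fun y z => W1 y z + W2 y z) x = div W1 x + div W2 x.
Proof. by rewrite /div -big_split; apply: eq_bigr => i _; rewrite addrACA. Qed.

Lemma div_sum (I : finType) (P : pred I) (W : I -> zpt d -> zpt d -> R) x :
  div (fun y z => \sum_(k | P k) W k y z) x = \sum_(k | P k) div (W k) x.
Proof. by rewrite /div exchange_big; apply: eq_bigr => i _; rewrite big_split. Qed.

Lemma eq_div_grad b1 b2 u1 u2 x :
  b1 =2 b2 -> u1 =1 u2 -> div_grad b1 u1 x = div_grad b2 u2 x.
Proof.
move=> eqb equ; rewrite /div_grad /div /mulbW /grad; apply: eq_bigr => i _.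
by rewrite !equ; congr (_ * _ + _ * _); apply: eq_bigr => k _; rewrite !eqb.
Qed.

Lemma div_gradDr b u1 u2 x :
  div_grad b (fun z => u1 z + u2 z) x = div_grad b u1 x + div_grad b u2 x.
Proof.
by rewrite /div_grad /div /mulbW /grad -big_split; apply: eq_bigr => i _ /=; ring.
Qed.

Lemma div_gradZr b u c x :
  div_grad b (fun z => c * u z) x = c * div_grad b u x.
Proof.
by rewrite /div_grad /div /mulbW /grad mulr_sumr; apply: eq_bigr => i _ /=; ring.
Qed.

Lemma div_gradBr b u1 u2 x :
  div_grad b (fun z => u1 z - u2 z) x = div_grad b u1 x - div_grad b u2 x.
Proof.
rewrite div_gradDr -mulN1r -div_gradZr; congr (_ + _).
by apply: eq_div_grad => // z; rewrite mulN1r.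
Qed.

Lemma div_grad_sumr (I : Type) (r : seq I) (P : pred I) b (u : I -> zpt d -> R) x :
  div_grad b (fun z => \sum_(k <- r | P k) u k z) x
  = \sum_(k <- r | P k) div_grad b (u k) x.
Proof.
rewrite /div_grad /div /mulbW /grad exchange_big; apply: eq_bigr => i _.
by rewrite -!sumrB !mulr_sumr -big_split.
Qed.

Lemma div_gradDl b1 b2 u x :
  div_grad (fun y i => b1 y i + b2 y i) u x = div_grad b1 u x + div_grad b2 u x.
Proof.
rewrite /div_grad /div /mulbW /grad -big_split; apply: eq_bigr => i _ /=.
rewrite addrACA -!mulrDl; congr (_ * _ + _ * _); rewrite -big_split;
  by apply: eq_bigr => k _ /=; rewrite !mulrDr addrACA.
Qed.

Lemma div_grad_suml (I : Type) (r : seq I) (P : pred I) (b : I -> conf R d) u x :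
  div_grad (fun y i => \sum_(k <- r | P k) b k y i) u x
  = \sum_(k <- r | P k) div_grad (b k) u x.
Proof.
elim: r => [|k r IHr].
  rewrite big_nil /div_grad /div /mulbW big1 // => i _.
  by rewrite !big1 ?mul0r ?addr0 // => k _; rewrite !big_nil !mulr0 addr0.
rewrite big_cons -IHr; case Pk: (P k).
  by rewrite -div_gradDl; apply: eq_div_grad => // y i; rewrite big_cons Pk.
by apply: eq_div_grad => // y i; rewrite big_cons Pk.
Qed.

End DivGrad.

Section Configurations.
Variables (R : nzRingType) (m d : nat).
Implicit Types (a : conf R d) (G : {set bedge m d}).

Lemma bpos_inj : injective (@bpos m d).
Proof.
by move=> k k' /ffunP eqk; apply/ffunP => i; have := eqk i;
  rewrite !ffunE => /addIr [] /val_inj.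
Qed.

Lemma cfg_set1E (e : bedge m d) a y i :
  cfg_set [set e] a y i = if (bpos e.1 == y) && (e.2 == i) then 1 else a y i.
Proof.
rewrite /cfg_set; congr (if _ then _ else _).
apply/existsP/idP => [[e' /andP[]]|he]; first by rewrite inE => /eqP ->.
by exists e; rewrite inE eqxx.
Qed.

Lemma cfg_setE G a y i : cfg_set G a y i = a y i + \sum_(e in G) dconf e a y i.
Proof.
rewrite /dconf; under eq_bigr do rewrite cfg_set1E; rewrite /cfg_set.
case: existsP => [[e0 /andP[e0G /andP[/eqP <- /eqP <-]]]|noG]; last first.
  rewrite big1 ?addr0 // => e eG; case: ifP => [he|_]; last by rewrite subrr.
  by case: noG; exists e; rewrite eG.
rewrite (bigD1 e0) //= !eqxx big1 ?addr0 => [|e /andP[_ ne]]; first by rewrite addrC subrK.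
case: ifP => [/andP[/eqP/bpos_inj h1 /eqP h2]|_]; last by rewrite subrr.
by case/eqP: ne; case: e e0 h1 h2 {e0G} => ? ? [? ?] /= -> ->.
Qed.

Lemma cfg_set0 a : cfg_set (set0 : {set bedge m d}) a = a.
Proof.
apply: functional_extensionality => y; apply: functional_extensionality => i.
by rewrite cfg_setE big_set0 addr0.
Qed.

Lemma cfg_setU1 (e : bedge m d) G a :
  cfg_set (e |: G) a = cfg_set [set e] (cfg_set G a).
Proof.
apply: functional_extensionality => y; apply: functional_extensionality => i.
rewrite cfg_set1E /cfg_set; case he: (_ && _).
  by case: existsP => // nE; exfalso; apply: nE; exists e; rewrite setU11 he.
congr (if _ then _ else _); apply/existsP/existsP => -[e' /andP[]].
  rewrite !inE => /orP[/eqP -> he'|e'G he']; first by rewrite he' in he.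
  by exists e'; rewrite e'G.
by move=> e'G he'; exists e'; rewrite !inE e'G orbT.
Qed.

Lemma cfg_set_closed (Omega : conf R d -> Prop) a G :
  (forall b (e : bedge m d), Omega b -> Omega (cfg_set [set e] b)) ->
  Omega a -> Omega (cfg_set G a).
Proof.
move=> Omega1 Oa; rewrite -[G]set_enum; elim: (enum G) => [|e s IHs].
  by rewrite set_nil cfg_set0.
by rewrite set_cons cfg_setU1; apply: Omega1.
Qed.

End Configurations.

Lemma div_grad_cfg_setl (R : comNzRingType) m d (G : {set bedge m d}) (a : conf R d) u x :
  div_grad (cfg_set G a) u x = div_grad a u x + \sum_(e in G) div_grad (dconf e a) u x.
Proof.
by rewrite -div_grad_suml -div_gradDl; apply: eq_div_grad => // y i; rewrite cfg_setE.
Qed.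

Section SubsetSums.
Variable T : finType.
Implicit Types (S H : {set T}) (e : T).

Lemma sum_subset_card_mem (V : nmodType) S e n (f : {set T} -> V) :
  \sum_(G : {set T} | (G \subset S) && (#|G| == n)) f G =
  \sum_(G : {set T} | (G \subset S) && (#|G| == n) && (e \in G)) f G +
  \sum_(G : {set T} | (G \subset S :\ e) && (#|G| == n)) f G.
Proof.
rewrite (bigID [pred G : {set T} | e \in G]) /=; congr (_ + _); apply: eq_bigl => G.
by rewrite subsetD1; case: (G \subset S); case: (#|G| == n); case: (e \in G).
Qed.

Lemma sum_subset_card0_mem (V : nmodType) S e (f : {set T} -> V) :
  \sum_(G : {set T} | (G \subset S) && (#|G| == 0%N) && (e \in G)) f G = 0.
Proof. by rewrite big1 // => G /andP[/andP[_ /eqP/cards0_eq ->]]; rewrite inE. Qed.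

Lemma sum_subset_cardS_mem (V : nmodType) S e n (f : {set T} -> V) : e \in S ->
  \sum_(G : {set T} | (G \subset S) && (#|G| == n.+1) && (e \in G)) f G =
  \sum_(G : {set T} | (G \subset S :\ e) && (#|G| == n)) f (e |: G).
Proof.
move=> eS; rewrite (reindex_onto (fun G => e |: G) (fun G => G :\ e)); last first.
  by move=> G /andP[_ eG]; rewrite setD1K.
apply: eq_bigl => G; rewrite subsetD1 setU11 andbT subUset sub1set eS /= cardsU1.
case eG: (e \in G) => /=; last by rewrite setU1K ?eG // eqxx add1n eqSS !andbT.
rewrite andbF /=; apply/negbTE; rewrite negb_and; apply/orP; right; apply/eqP => H.
by move: eG; rewrite -H !inE eqxx.
Qed.

(* Inclusion-exclusion step: the subsets of H containing e are the subsets of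
   H minus those of H \ e, and dropping e from H flips the sign. *)
Lemma sum_subset_sign_mem (R : nzRingType) H e (f : {set T} -> R) : e \in H ->
  \sum_(G : {set T} | (G \subset H) && (e \in G)) (-1) ^+ #|H :\: G| * f G =
  \sum_(G : {set T} | G \subset H) (-1) ^+ #|H :\: G| * f G +
  \sum_(G : {set T} | G \subset H :\ e) (-1) ^+ #|(H :\ e) :\: G| * f G.
Proof.
move=> eH; rewrite [in RHS](bigID [pred G : {set T} | e \in G]) /= -addrA.
rewrite [X in _ + X](_ : _ = 0) ?addr0 //.
rewrite [X in _ + X](eq_bigl (fun G : {set T} => (G \subset H) && (e \notin G))); last first.
  by move=> G; rewrite subsetD1.
rewrite -big_split big1 //= => G /andP[GH eG].
have -> : (H :\ e) :\: G = (H :\: G) :\ e by apply/setP => y; rewrite !inE; bool_congr.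
by rewrite (cardsD1 e (H :\: G)) !inE eH (negbTE eG) add1n exprS mulN1r mulNr addNr.
Qed.

End SubsetSums.

Lemma subz1S (n : nat) : n.+1%:Z - 1 = n.
Proof. by rewrite -addn1 PoszD addrK. Qed.

Lemma subz2SS (n : nat) : n.+2%:Z - 2 = n.
Proof. by rewrite -addn2 PoszD addrK. Qed.

Section Expansion.
Variables (R : comNzRingType) (d m : nat) (v : conf R d -> zpt d -> R) (a : conf R d).
Implicit Types (F G H : {set bedge m d}) (e : bedge m d) (x z : zpt d).

Definition DG_pair H e z := DG v H a z + DG v (H :\ e) a z.

Lemma Vm_setU1E F e (k : nat) z :
  \sum_(G : {set bedge m d} | (G \subset (Ebox m d :\: F) :\ e) && (#|G| == k))
     DG v (F :|: (e |: G)) a z = Vm v a (F :|: [set e]) k z.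
Proof. by rewrite /= setDDl; apply: eq_bigr => G _; rewrite setUA. Qed.

Lemma sum_DG_pair_notin F e (j : nat) z : e \in Ebox m d :\: F ->
  \sum_(G : {set bedge m d} | (G \subset Ebox m d :\: F) && (#|G| == j) && (e \in G))
     DG_pair (F :|: G) e z
  = Vm v a F (j%:Z - 1) z - Vm v a (F :|: [set e]) (j%:Z - 2) z
    + Vm v a (F :|: [set e]) (j%:Z - 1) z.
Proof.
move=> eS; have eF : e \notin F by move: eS; rewrite inE => /andP[].
case: j => [|n]; first by rewrite sum_subset_card0_mem /= subrr addr0.
rewrite sum_subset_cardS_mem // subz1S /DG_pair.
rewrite (eq_bigr (fun G => DG v (F :|: (e |: G)) a z + DG v (F :|: G) a z)); last first.
  move=> G /andP[]; rewrite subsetD1 => /andP[_ eG] _; congr (_ + DG v _ a z).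
  apply/setP => y; rewrite !inE; case: (eqVneq y e) => [->|] //=.
  by rewrite (negbTE eF) (negbTE eG).
rewrite big_split Vm_setU1E.
rewrite -[Vm v a F n z]/(\sum_(G : {set bedge m d} | (G \subset Ebox m d :\: F) && (#|G| == n))
                          DG v (F :|: G) a z).
rewrite [in RHS](sum_subset_card_mem _ e); case: n => [|n].
  by rewrite sum_subset_card0_mem /= add0r subr0 addrC.
by rewrite sum_subset_cardS_mem // subz2SS Vm_setU1E /=; ring.
Qed.

Lemma sum_DG_pair_in F e (j : nat) z : e \in F -> e \in Ebox m d ->
  \sum_(G : {set bedge m d} | (G \subset Ebox m d :\: F) && (#|G| == j))
     DG_pair (F :|: G) e z - Vm v a F j z
  = Vm v a (F :\ e) j z - Vm v a F (j%:Z - 1) z.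
Proof.
move=> eF eE; rewrite /DG_pair big_split [Vm v a F j z]/= -addrA addrC addrNK.
have eS : e \in Ebox m d :\: (F :\ e) by rewrite in_setD in_setD1 eqxx eE.
have SE : (Ebox m d :\: (F :\ e)) :\ e = Ebox m d :\: F.
  by apply/setP => y; rewrite !inE; case: (eqVneq y e) => [->|] //=; rewrite eF.
rewrite -[Vm v a (F :\ e) j z]/(\sum_(G : {set bedge m d} |
    (G \subset Ebox m d :\: (F :\ e)) && (#|G| == j)) DG v (F :\ e :|: G) a z).
rewrite [in RHS](sum_subset_card_mem _ e) SE.
rewrite [X in _ = _ + X - _](eq_bigr (fun G => DG v ((F :|: G) :\ e) a z)); last first.
  move=> G /andP[GS _]; have eG : e \notin G.
    by apply/negP => /(subsetP GS); rewrite inE eF.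
  congr (DG v _ a z); apply/setP => y; rewrite !inE.
  by case: (eqVneq y e) => [->|] //=; rewrite (negbTE eG).
case: j => [|n]; first by rewrite sum_subset_card0_mem /= add0r subr0.
rewrite sum_subset_cardS_mem // subz1S SE.
rewrite [X in _ = X + _ - _](eq_bigr (fun G => DG v (F :|: G) a z)); last first.
  move=> G _; congr (DG v _ a z); apply/setP => y; rewrite !inE.
  by case: (eqVneq y e) => [->|] //=; rewrite eF.
by rewrite -/(Vm v a F n z) addrAC subrr add0r.
Qed.

End Expansion.

Section Harmonic.
Variables (R : comNzRingType) (d m : nat) (v : conf R d -> zpt d -> R) (a : conf R d).
Variable Omega : conf R d -> Prop.
Hypothesis Omega_cfg_set1 : forall b (e : bedge m d), Omega b -> Omega (cfg_set [set e] b).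
Hypothesis Omega_a : Omega a.
Hypothesis v_harmonic :
  forall b, Omega b -> forall x, interior m x -> div_grad b (v b) x = 0.
Variables (x : zpt d) (x_interior : interior m x).
Implicit Types (F G H : {set bedge m d}) (e : bedge m d).

Lemma div_grad_cfg_set G :
  div_grad a (v (cfg_set G a)) x = - \sum_(e in G) div_grad (dconf e a) (v (cfg_set G a)) x.
Proof.
apply/eqP; rewrite -addr_eq0 -div_grad_cfg_setl.
by rewrite v_harmonic //; apply: cfg_set_closed.
Qed.

Lemma div_grad_DG H :
  div_grad a (DG v H a) x = - \sum_(e in H) div_grad (dconf e a) (DG_pair v a H e) x.
Proof.
rewrite div_grad_sumr.
under eq_bigr => G _ do rewrite div_gradZr div_grad_cfg_set mulrN mulr_sumr.
rewrite sumrN (exchange_big_dep (mem H)) /= => [|G e GH eG]; last exact: subsetP GH e eG.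
congr (- _); apply: eq_bigr => e eH.
under eq_bigr do rewrite -div_gradZr.
rewrite -div_grad_sumr; apply: eq_div_grad => // z.
by rewrite /DG_pair /DG sum_subset_sign_mem.
Qed.

Lemma div_grad_Vm F (j : nat) : F \subset Ebox m d ->
  - div_grad (cfg_set F a) (Vm v a F j) x =
  \sum_(e in Ebox m d :\: F)
      div_grad (dconf e a) (fun z => Vm v a F (j%:Z - 1) z
        - Vm v a (F :|: [set e]) (j%:Z - 2) z + Vm v a (F :|: [set e]) (j%:Z - 1) z) x
  + \sum_(e in F) div_grad (dconf e a) (fun z => Vm v a (F :\ e) j z - Vm v a F (j%:Z - 1) z) x.
Proof.
move=> FE.
set L_pair := fun G e => div_grad (dconf e a) (DG_pair v a (F :|: G) e) x.
have div_grad_a_Vm : - div_grad a (Vm v a F j) x =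
    \sum_(G : {set bedge m d} | (G \subset Ebox m d :\: F) && (#|G| == j))
      (\sum_(e in F) L_pair G e + \sum_(e in G) L_pair G e).
  rewrite [Vm v a F j]/= div_grad_sumr -sumrN; apply: eq_bigr => G /andP[GS _].
  rewrite div_grad_DG opprK (eq_bigl [predU F & G]) => [|e]; last by rewrite !inE.
  rewrite bigU // disjoint_sym disjoint_subset; apply/subsetP => e eG.
  by move: (subsetP GS e eG); rewrite in_setD => /andP[].
rewrite div_grad_cfg_setl opprD div_grad_a_Vm big_split /=.
rewrite [X in _ + X - _](exchange_big_dep (mem (Ebox m d :\: F))) /=; last first.
  by move=> G e /andP[GS _] eG; apply: (subsetP GS).
rewrite [X in X + _ - _]exchange_big /= addrAC addrC; congr (_ + _).
  apply: eq_bigr => e eS; rewrite -div_grad_sumr.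
  by apply: eq_div_grad => // z; apply: sum_DG_pair_notin.
rewrite -sumrB; apply: eq_bigr => e eF; rewrite -div_grad_sumr -div_gradBr.
by apply: eq_div_grad => // z; apply: sum_DG_pair_in => //; apply: (subsetP FE).
Qed.

End Harmonic.

(* The boundary values [Hbd] play no role: the identity only uses the
   harmonicity of every [v (a^G)] at interior points. *)
Theorem lemma3p5 (R : realFieldType) (d m : nat) (xi : 'I_d -> R)
  (Omega : conf R d -> Prop) (v : conf R d -> zpt d -> R) (a : conf R d)
  (HOmega : forall (b : conf R d) (e : bedge m d), Omega b -> Omega (cfg_set [set e] b))
  (Ha : Omega a)
  (Hbd : forall b, Omega b -> forall x : zpt d, onbound m x ->
           v b x = \sum_(i < d) xi i * (x i)%:~R)
  (Hharm : forall b, Omega b -> forall x : zpt d, interior m x ->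
           div (mulbW b (grad (v b))) x = 0)
  (F : {set bedge m d}) (HF : F \subset Ebox m d) (j : nat) :
  forall x : zpt d, interior m x ->
    - div (mulbW (cfg_set F a) (grad (Vm v a F j))) x = div (Wm v a F j) x.
Proof.
move=> x Hx; rewrite /Wm divD !div_sum.
exact: (div_grad_Vm HOmega Ha Hharm Hx j HF).
Qed.
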